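(* If $H=(\alpha,\beta)$ is a semi-norming $k$-hypergraph pair over $V$, then $\alpha(\omega)+\beta(\omega)\ge1$ for every $\omega\in{\rm supp}(\alpha)\cup{\rm supp}(\beta)$.
   Context: A $k$-hypergraph pair $H=(\alpha,\beta)$ consists of finite nonempty sets $V_1,\dots,V_k$ and functions $\alpha,\beta:V\to\mathbb{R}$, where $V=V_1\times\cdots\times V_k$; its size is $|H|=\sum_{\omega\in V}(|\alpha(\omega)|+|\beta(\omega)|)$. All measures are positive. For a measure space $\mathcal M=(\Omega,\mathcal F,\mu)$, the space $\Omega^{V_1}\times\cdots\times\Omega^{V_k}$ (points $x=(x_{i,v})_{i\in[k],v\in V_i}$) carries the product measure, and each $\omega=(\omega_1,\dots,\omega_k)\in V$ defines the projection $\omega(x)=(x_{1,\omega_1},\dots,x_{k,\omega_k})\in\Omega^k$. For measurable $f:\Omega^k\to\mathbb C$, $f^H(x)=\prod_{\omega\in V} f(\omega(x))^{\alpha(\omega)}\,\overline{f(\omega(x))^{\beta(\omega)}}$, with the convention $0^0=1$ (non-integer complex powers taken with a fixed branch). When $\alpha,\beta\ge 0$, set $\|f\|_H=(\int f^H)^{1/|H|}$, and let $L_H(\mathcal M)$ be the set of measurable $f$ with $\|\,|f|\,\|_H<\infty$. $H$ (with $\alpha,\beta\ge0$) is called norming (resp. semi-norming) if $\|\cdot\|_H$ is a norm (resp. semi-norm) on $L_H(\mathcal M)$ for every measure space $\mathcal M$. *)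

From mathcomp Require Import all_boot all_order all_algebra.
From mathcomp Require Import all_classical all_reals all_analysis.
From mathcomp Require Import complex.
Import Order.TTheory GRing.Theory Num.Theory.
Set Implicit Arguments.
Unset Strict Implicit.
Unset Printing Implicit Defensive.
Local Open Scope ring_scope.
Local Open Scope classical_set_scope.

Section HypergraphPairs.
Variable R : realType.
Local Notation C := R[i].

(** Complex power with the principal branch of the argument, arg in (-pi, pi];
    convention 0^0 = 1 (and 0^a = 0 for a <> 0).  For a a natural number this
    is the usual power z ^+ a. *)
Definition carg (z : C) : R :=
  let r := Num.sqrt (complex.Re z ^+ 2 + complex.Im z ^+ 2) in
  if 0 <= complex.Im z then acos (complex.Re z / r) else - acos (complex.Re z / r).

Definition cpow (z : C) (a : R) : C :=
  if z == 0 then (a == 0)%:R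
  else let r := Num.sqrt (complex.Re z ^+ 2 + complex.Im z ^+ 2) in
       Complex (powR r a * cos (a * carg z)) (powR r a * sin (a * carg z)).

Variable k : nat.
Variable V : 'I_k -> finType.

Definition Vprod := {dffun forall i : 'I_k, V i}.

Definition Coord := {i : 'I_k & V i}.

Definition hsize (alpha beta : Vprod -> R) : R :=
  \sum_(w : Vprod) (`|alpha w| + `|beta w|).

Variables (d : measure_display) (T : measurableType d).
Variable mu : {measure set T -> \bar R}.

Definition Pt := forall i : 'I_k, V i -> T.

Definition proj (w : Vprod) (x : Pt) : 'I_k -> T := fun i => x i (w i).

(** product sigma-algebra on Omega^k, generated by measurable cylinders *)
Definition cylk : set (set ('I_k -> T)) :=
  fun S => exists i A, measurable A /\ S = [set x | A (x i)].

(** measurability of f : Omega^k -> C (Borel sigma-algebra on C = R^2) *)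
Definition kmeasurable (f : ('I_k -> T) -> C) : Prop :=
  forall B : set R, measurable B ->
    <<s cylk >> ((fun x => complex.Re (f x)) @^-1` B) /\
    <<s cylk >> ((fun x => complex.Im (f x)) @^-1` B).

Definition upd (x : Pt) (j : Coord) (t : T) : Pt :=
  fun i v => if Tagged (fun i => V i) v == j then t else x i v.

Fixpoint iint (s : seq Coord) (g : Pt -> \bar R) (x : Pt) : \bar R :=
  match s with
  | [::] => g x
  | j :: s' => (\int[mu]_t iint s' g (upd x j t))%E
  end.

(** integral of a nonnegative function against the product measure mu^{V}
    (computed as an iterated integral; for sigma-finite mu this is the integral
    against the product measure, by Tonelli).  If Omega is empty, the product
    space is empty (the coordinate set is nonempty for k >= 1) and the integral
    is 0. *)
Definition prodint (g : Pt -> \bar R) : \bar R :=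
  match pselect (exists t : T, True) with
  | left H => iint (enum {: Coord}) g (fun _ _ => projT1 (cid H))
  | right _ => 0%E
  end.

Definition prodintR (u : Pt -> R) : R :=
  fine (prodint (fun x => (Num.max (u x) 0)%:E)) -
  fine (prodint (fun x => (Num.max (- u x) 0)%:E)).

Definition prodintC (h : Pt -> C) : C :=
  Complex (prodintR (fun x => complex.Re (h x))) (prodintR (fun x => complex.Im (h x))).

Variables alpha beta : Vprod -> R.

Definition fH (f : ('I_k -> T) -> C) (x : Pt) : C :=
  \prod_(w : Vprod)
     (cpow (f (proj w x)) (alpha w) * Num.conj (cpow (f (proj w x)) (beta w))).

Definition normH (f : ('I_k -> T) -> C) : C :=
  cpow (prodintC (fH f)) (hsize alpha beta)^-1.

Definition LH (f : ('I_k -> T) -> C) : Prop :=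
  kmeasurable f /\
  (prodint (fun x => (complex.Re (fH (fun y => (`|f y| : C)) x))%:E) < +oo)%E.

Definition seminorm_on (L : (('I_k -> T) -> C) -> Prop)
    (N : (('I_k -> T) -> C) -> C) : Prop :=
  [/\ forall f, L f -> 0 <= N f,
      forall f (c : C), L f -> L (fun y => c * f y) /\ N (fun y => c * f y) = `|c| * N f
    & forall f g, L f -> L g ->
        L (fun y => f y + g y) /\ N (fun y => f y + g y) <= N f + N g].

End HypergraphPairs.

Definition seminorming (R : realType) (k : nat) (V : 'I_k -> finType)
    (alpha beta : Vprod V -> R) : Prop :=
  forall (d : measure_display) (T : measurableType d)
         (mu : {measure set T -> \bar R}),
    sigma_finite setT mu ->
    seminorm_on (LH mu alpha beta) (normH mu alpha beta).

(* Test ||.||_H on the two-point space {false, true} with counting measure, using the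
   functions f_t equal to t where all k coordinates are true and to 1 elsewhere.  Since
   f_t = (1 - t) f_0 + t f_1, a semi-norm makes t |-> ||f_t||_H convex, so
   ||f_t||_H <= ||f_0||_H + C t on [0, 1].  On the other hand, the point of the product
   space whose only all-true projection is w contributes t^(alpha w + beta w) to
   ||f_t||_H^|H| = \int f_t^H; if alpha w + beta w < 1 this beats any linear bound near
   t = 0. *)

From Pilot Require Import Defs.
From mathcomp Require Import all_boot all_order all_algebra.
From mathcomp Require Import all_classical all_reals all_analysis.
From mathcomp Require Import complex.
From mathcomp Require Import ring lra.
Import Order.TTheory GRing.Theory Num.Theory.
Local Open Scope classical_set_scope.
Local Open Scope complex_scope.
Local Open Scope ring_scope.

Section PowerGrowth.
Context {R : realType}.
Implicit Types a g n x y t K S u : R.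

Lemma expR_le1DxexpR x : expR x <= 1 + x * expR x.
Proof.
have := expR_ge1Dx (- x); rewrite expRN => h.
have e0 := expR_gt0 x.
have : (1 - x) * expR x <= 1.
  by rewrite -[leRHS](@mulVf _ (expR x)) ?gt_eqF // ler_pM2r.
lra.
Qed.

Lemma powR1D_le_expR S u : 0 <= S -> 0 <= u -> (1 + u) `^ S <= expR (S * u).
Proof.
move=> S0 u0; rewrite mulrC expRM.
by apply: ge0_ler_powR; rewrite ?nnegrE ?expR_ge0 ?expR_ge1Dx //; lra.
Qed.

Lemma powR_addr_linear_bound S x y : 0 <= S -> 0 < x -> 0 <= y ->
  exists L, forall t, 0 <= t <= 1 -> (x + t * y) `^ S <= x `^ S + t * L.
Proof.
move=> S0 x0 y0; set c := S * y / x.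
have c0 : 0 <= c by apply: divr_ge0; [exact: mulr_ge0 | exact: ltW].
exists (x `^ S * c * expR c) => t /andP[t0 t1].
have tc0 : 0 <= t * c by rewrite mulr_ge0.
have -> : x + t * y = x * (1 + t * y / x).
  by rewrite mulrDr mulr1 mulrCA mulfV ?gt_eqF // mulr1.
have u0 : 0 <= t * y / x by rewrite divr_ge0 ?mulr_ge0 // ltW.
rewrite powRM ?addr_ge0 ?(ltW x0) //.
have -> : x `^ S + t * (x `^ S * c * expR c) = x `^ S * (1 + t * c * expR c).
  by rewrite mulrDr mulr1 !mulrA (mulrC t).
apply: ler_wpM2l; first exact: powR_ge0.
have Su : S * (t * y / x) = t * c by rewrite /c !mulrA (mulrC S t).
apply: (le_trans (powR1D_le_expR _ _ S0 u0)); rewrite Su.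
apply: (le_trans (expR_le1DxexpR _)); rewrite lerD2l.
apply: ler_wpM2l => //; rewrite ler_expR -[leRHS]mul1r; exact: ler_wpM2r.
Qed.

Lemma powR_gt_linear_near0 g K : g < 1 -> exists2 t, 0 < t <= 1 & K * t < t `^ g.
Proof.
move=> g1; set M := Num.max K 0 + 1; set e := (1 - g)^-1.
have M1 : 1 <= M by rewrite lerDr le_max lexx orbT.
have M0 : 0 < M := lt_le_trans ltr01 M1.
have Me0 : 0 < M `^ (- e) by rewrite powR_gt0.
exists (M `^ (- e)).
  rewrite Me0 powRN invf_le1 ?powR_gt0 // -[leLHS](powRr0 M) ler_powR //.
  by rewrite invr_ge0 subr_ge0 ltW.
have eg : - e * g = - e + 1.
  by rewrite /e; field; rewrite subr_eq0 gt_eqF.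
rewrite -powRrM eg powRD ?(gt_eqF M0) ?implybT // powRr1 ?ltW //.
by rewrite mulrC ltr_pM2l // /M ltr_pwDr // le_max lexx.
Qed.

Lemma root_addpowR_superlinear a S g n : 0 < a -> 0 < S -> g < 1 -> 0 <= n ->
  exists2 t, 0 < t <= 1 & a `^ S^-1 + t * n < (a + t `^ g) `^ S^-1.
Proof.
move=> a0 S0 g1 n0; set x := a `^ S^-1.
have x0 : 0 < x by rewrite powR_gt0.
have [L hL] := powR_addr_linear_bound _ _ _ (ltW S0) x0 n0.
have [t /andP[t0 t1] hlt] := powR_gt_linear_near0 _ L g1.
exists t; first by rewrite t0.
have xS : x `^ S = a by rewrite -powRrM mulVf ?gt_eqF // powRr1 ?ltW.
have xtn0 : 0 <= x + t * n by rewrite addr_ge0 ?mulr_ge0 // ltW.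
rewrite -[ltLHS](powRr1 xtn0) -(divff (lt0r_neq0 S0)) powRrM.
apply: gt0_ltr_powR; rewrite ?invr_gt0 ?nnegrE ?addr_ge0 ?powR_ge0 ?(ltW a0) //.
have t01 : 0 <= t <= 1 by rewrite t1 ltW.
by apply: (le_lt_trans (hL t t01)); rewrite xS ltrD2l mulrC.
Qed.

End PowerGrowth.

Section ProductIntegral.
Context {R : realType} {k : nat} {V : 'I_k -> finType}.
Context {d : measure_display} {T : measurableType d}.
Variable mu : {measure set T -> \bar R}.

Lemma iint_ge0 s (g : Pt V T -> \bar R) x :
  (forall y, 0 <= g y)%E -> (0 <= iint mu s g x)%E.
Proof.
move=> g0; elim: s x => [|j s IH] x /=; first exact: g0.
by apply: integral_ge0 => t _; apply: IH.
Qed.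

Lemma prodint_ge0 (g : Pt V T -> \bar R) :
  (forall y, 0 <= g y)%E -> (0 <= prodint mu g)%E.
Proof. by move=> g0; rewrite /prodint; case: pselect => [?|_] //; apply: iint_ge0. Qed.

End ProductIntegral.

Section TwoPointSpace.
Context {R : realType} {k : nat} {V : 'I_k -> finType}.
Local Notation Pt2 := (Pt V bool).

Definition mu2 : {measure set bool -> \bar R} := measure_add \d_false \d_true.

Lemma mu2_sigma_finite : sigma_finite setT mu2.
Proof.
exists (fun _ => setT); first by rewrite bigcup_const.
move=> _; split => //.
rewrite /mu2 /measure_add /= /msum 2!big_ord_recl /= big_ord0 adde0 !diracT.
by rewrite -EFinD ltry.
Qed.

Implicit Types (s : seq (Coord V)) (g : Pt2 -> \bar R) (u : Pt2 -> R).

Lemma iint_mu2_cons j s g x : (forall y, 0 <= g y)%E ->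
  iint mu2 (j :: s) g x = (iint mu2 s g (upd x j false) + iint mu2 s g (upd x j true))%E.
Proof.
move=> g0 /=; rewrite ge0_integral_measure_add //; last by move=> t _; apply: iint_ge0.
by rewrite !integral_dirac // !diracT !mul1e.
Qed.

Lemma iint_mu2_fin_num s u x : (forall y, 0 <= u y) ->
  iint mu2 s (fun y => (u y)%:E) x \is a fin_num.
Proof.
move=> u0; elim: s x => [|j s IH] x //.
by rewrite iint_mu2_cons ?fin_numD ?IH // => y; rewrite lee_fin.
Qed.

Lemma iint_mu2D s g1 g2 x : (forall y, 0 <= g1 y)%E -> (forall y, 0 <= g2 y)%E ->
  iint mu2 s (fun y => g1 y + g2 y)%E x = (iint mu2 s g1 x + iint mu2 s g2 x)%E.
Proof.
move=> g10 g20; elim: s x => [|j s IH] x //.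
rewrite !iint_mu2_cons // ?IH; first by rewrite addeACA.
by move=> y; apply: adde_ge0.
Qed.

(* Integrating over the coordinates in s sums over all their values, x' among them. *)
Lemma iint_mu2_ge_pt s g x x' : (forall y, 0 <= g y)%E ->
  (forall c : Coord V, c \notin s -> x' (tag c) (tagged c) = x (tag c) (tagged c)) ->
  (g x' <= iint mu2 s g x)%E.
Proof.
move=> g0; elim: s x => [|j s IH] x x'x.
  have -> : x' = x; last by [].
  apply: functional_extensionality_dep => i; apply: functional_extensionality_dep => v.
  exact: (x'x (Tagged V v)).
rewrite iint_mu2_cons //.
apply: (@le_trans _ _ (iint mu2 s g (upd x j (x' (tag j) (tagged j))))).
  apply: IH => -[i v] cs; rewrite /upd /=.
  case: eqP => [<-|/eqP cj] //.
  by apply: (x'x (Tagged V v)); rewrite inE negb_or cs andbT.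
case: (x' (tag j) (tagged j)).
- by rewrite leeDr // iint_ge0.
- by rewrite leeDl // iint_ge0.
Qed.

Lemma prodint_mu2E : exists x, forall g, prodint mu2 g = iint mu2 (enum {: Coord V}) g x.
Proof.
rewrite /prodint; case: pselect => [H|H]; first by eexists.
by exfalso; apply: H; exists true.
Qed.

Lemma prodint_mu2_fin_num u : (forall y, 0 <= u y) ->
  prodint mu2 (fun y => (u y)%:E) \is a fin_num.
Proof. by move=> u0; have [x ->] := prodint_mu2E; apply: iint_mu2_fin_num. Qed.

Lemma prodint_mu2D g1 g2 : (forall y, 0 <= g1 y)%E -> (forall y, 0 <= g2 y)%E ->
  prodint mu2 (fun y => g1 y + g2 y)%E = (prodint mu2 g1 + prodint mu2 g2)%E.
Proof. by move=> g10 g20; have [x E] := prodint_mu2E; rewrite !E iint_mu2D. Qed.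

Lemma prodint_mu2_ge_pt g x' : (forall y, 0 <= g y)%E -> (g x' <= prodint mu2 g)%E.
Proof.
move=> g0; have [x ->] := prodint_mu2E.
by apply: iint_mu2_ge_pt => // c; rewrite mem_enum.
Qed.

Lemma prodint_mu2_cst0 : prodint mu2 (fun _ : Pt2 => 0%E) = 0%E.
Proof.
have [x ->] := prodint_mu2E.
by elim: (enum _) x => [|j s IH] x //; rewrite iint_mu2_cons // !IH adde0.
Qed.

Lemma prodintR_mu2_ge0 u : (forall y, 0 <= u y) ->
  prodintR mu2 u = fine (prodint mu2 (fun y => (u y)%:E)).
Proof.
move=> u0; rewrite /prodintR.
have -> : (fun x => (Num.max (u x) 0)%:E) = (fun y => (u y)%:E).
  by apply/funext => y; rewrite max_l.
have -> : (fun x => (Num.max (- u x) 0)%:E) = (fun _ => 0%E).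
  by apply/funext => y; rewrite max_r // oppr_le0.
by rewrite prodint_mu2_cst0 subr0.
Qed.

End TwoPointSpace.

Lemma cylk_measurable_all_true {k : nat} (P : bool -> Prop) :
  <<s @cylk k _ bool >> [set y : 'I_k -> bool | P [forall i, y i]].
Proof.
set A := [set y : 'I_k -> bool | [forall i, y i]].
have mA : <<s @cylk k _ bool >> A.
  have -> : A = \bigcap_(i in [set: 'I_k]) [set y | [set true] (y i)].
    apply/seteqP; split => y /=; first by move=> /forallP h i _; apply: h.
    by move=> h; apply/forallP => i; exact: (h i I).
  apply: (@fin_bigcap_measurable _ (g_sigma_algebraType (@cylk k _ bool))).
    exact: finite_finset.
  by move=> i _; apply: sub_sigma_algebra; exists i, [set true].
have [Ptrue|Ptrue] := pselect (P true); have [Pfalse|Pfalse] := pselect (P false).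
- have -> : [set y : 'I_k -> bool | P [forall i, y i]] = setT.
    by apply/seteqP; split => y //= _; case: [forall i, y i].
  exact: (@measurableT _ (g_sigma_algebraType (@cylk k _ bool))).
- have -> : [set y : 'I_k -> bool | P [forall i, y i]] = A.
    by apply/seteqP; split => y; rewrite /A /=; case: [forall i, y i].
  exact: mA.
- have -> : [set y : 'I_k -> bool | P [forall i, y i]] = ~` A.
    by apply/seteqP; split => y; rewrite /A /=; case: [forall i, y i].
  exact: sigma_algebraC.
- have -> : [set y : 'I_k -> bool | P [forall i, y i]] = set0.
    by apply/seteqP; split => y //=; case: [forall i, y i].
  exact: (@sigma_algebra0 _ setT).
Qed.

Lemma cpow_real_ge0 (R : realType) (r a : R) : 0 <= r -> cpow r%:C a = (r `^ a)%:C.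
Proof.
move=> r0; rewrite /cpow.
have [->|r_neq0] := eqVneq r 0; first by rewrite eqxx /powR eqxx; case: (a == 0).
have -> : (r%:C == 0) = false by apply/negbTE; apply: contra r_neq0 => /eqP [] ->.
rewrite /carg /= lexx expr0n /= addr0 sqrtr_sqr ger0_norm // divff // acos1.
by rewrite mulr0 cos0 sin0 mulr1 mulr0.
Qed.

Section RealTestFunctions.
Context {R : realType} {k : nat} {V : 'I_k -> finType}.
Variables alpha beta : Vprod V -> R.
Local Notation Pt2 := (Pt V bool).
Implicit Types (r : ('I_k -> bool) -> R) (x : Pt2).

Lemma hsize_gt0 w0 : (alpha w0 != 0) || (beta w0 != 0) -> 0 < hsize alpha beta.
Proof.
move=> w0_supp; rewrite /hsize (bigD1 w0) //=.
have : 0 <= \sum_(w | w != w0) (`|alpha w| + `|beta w|).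
  by apply: sumr_ge0 => w _; rewrite addr_ge0.
have := normr_ge0 (alpha w0); have := normr_ge0 (beta w0).
by case/orP: w0_supp; rewrite -normr_gt0; lra.
Qed.

Definition fHR r x : R :=
  \prod_(w : Vprod V) (r (Defs.proj w x) `^ alpha w * r (Defs.proj w x) `^ beta w).

Definition intfHR r : R := fine (prodint mu2 (fun x => (fHR r x)%:E)).

Lemma fHR_ge0 r x : 0 <= fHR r x.
Proof. by apply: prodr_ge0 => w _; rewrite mulr_ge0 ?powR_ge0. Qed.

Lemma intfHR_ge0 r : 0 <= intfHR r.
Proof. by apply/fine_ge0/prodint_ge0 => x; rewrite lee_fin fHR_ge0. Qed.

Lemma intfHR_ge_pt r x : fHR r x <= intfHR r.
Proof.
rewrite -lee_fin /intfHR fineK; last exact/prodint_mu2_fin_num/fHR_ge0.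
by apply: prodint_mu2_ge_pt => y; rewrite lee_fin fHR_ge0.
Qed.

Lemma intfHR_ge_addpt r1 r2 x : (forall y, fHR r1 y <= fHR r2 y) ->
  intfHR r1 + (fHR r2 x - fHR r1 x) <= intfHR r2.
Proof.
move=> r12; have d0 y : 0 <= fHR r2 y - fHR r1 y by rewrite subr_ge0.
have E : prodint mu2 (fun y => (fHR r2 y)%:E) =
    (prodint mu2 (fun y => (fHR r1 y)%:E) +
     prodint mu2 (fun y => (fHR r2 y - fHR r1 y)%:E))%E.
  rewrite -prodint_mu2D; last by move=> y; rewrite lee_fin d0.
    by congr prodint; apply/funext => y; rewrite -EFinD addrC subrK.
  by move=> y; rewrite lee_fin fHR_ge0.
have fin1 := prodint_mu2_fin_num _ (fHR_ge0 r1).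
have fin21 := prodint_mu2_fin_num _ d0.
rewrite /intfHR E fineD // lerD2l -lee_fin fineK //.
by apply: prodint_mu2_ge_pt => y; rewrite lee_fin d0.
Qed.

Lemma fH_realE r x : (forall y, 0 <= r y) ->
  fH alpha beta (fun y => (r y)%:C) x = (fHR r x)%:C.
Proof.
move=> r0; rewrite /fH /fHR rmorph_prod; apply: eq_bigr => w _.
by rewrite !cpow_real_ge0 // conj_Creal ?rmorphM // ger0_real // ler0c powR_ge0.
Qed.

Lemma normH_realE r : (forall y, 0 <= r y) ->
  normH mu2 alpha beta (fun y => (r y)%:C) = (intfHR r `^ (hsize alpha beta)^-1)%:C.
Proof.
move=> r0; rewrite /normH /prodintC.
have -> : (fun x => complex.Re (fH alpha beta (fun y => (r y)%:C) x)) = fHR r.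
  by apply/funext => x; rewrite fH_realE.
have -> : (fun x => complex.Im (fH alpha beta (fun y => (r y)%:C) x)) = (fun _ => 0).
  by apply/funext => x; rewrite fH_realE.
rewrite !prodintR_mu2_ge0 //; last exact: fHR_ge0.
rewrite -[fun _ => 0%:E]/(fun _ => 0%E) prodint_mu2_cst0 /=.
by rewrite -[X in cpow X _]/((intfHR r)%:C) cpow_real_ge0 ?intfHR_ge0.
Qed.

Lemma LH_two_valued (c1 c2 : R) : 0 <= c1 -> 0 <= c2 ->
  LH mu2 alpha beta (fun y => (if [forall i, y i] then c1 else c2)%:C).
Proof.
set r := fun y : 'I_k -> bool => if [forall i, y i] then c1 else c2 => c10 c20.
have r0 y : 0 <= r y by rewrite /r; case: ifP.
split.
  move=> B _; split.
    exact: (cylk_measurable_all_true (fun b => B (if b then c1 else c2))).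
  exact: (cylk_measurable_all_true (fun _ => B 0)).
have -> : (fun y => (`|(r y)%:C| : R[i])) = (fun y => (r y)%:C).
  by apply/funext => y; rewrite ger0_norm // ler0c.
have -> : (fun x => (complex.Re (fH alpha beta (fun y => (r y)%:C) x))%:E) =
    (fun x => (fHR r x)%:E).
  by apply/funext => x; rewrite fH_realE.
by have /fin_numPlt/andP[] := prodint_mu2_fin_num _ (fHR_ge0 r).
Qed.

End RealTestFunctions.

Section TestFunctions.
Context {R : realType} {k : nat} {V : 'I_k -> finType}.
Variables alpha beta : Vprod V -> R.
Local Notation Pt2 := (Pt V bool).
Implicit Types (t : R) (w : Vprod V).

Definition ftest t (y : 'I_k -> bool) : R := if [forall i, y i] then t else 1.

Local Notation normH_ftest t := (intfHR alpha beta (ftest t) `^ (hsize alpha beta)^-1).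

Definition pt_of w : Pt2 := fun i v => v == w i.

Lemma ftest_ge0 t y : 0 <= t -> 0 <= ftest t y.
Proof. by rewrite /ftest; case: ifP. Qed.

Lemma all_proj_pt_of w w0 : [forall i, Defs.proj w (pt_of w0) i] = (w == w0).
Proof.
apply/forallP/eqP => [h|->]; last by move=> i; rewrite /Defs.proj /pt_of eqxx.
by apply/ffunP => i; apply/eqP; apply: h.
Qed.

Lemma fHR_ftest_pt_of t w0 :
  fHR alpha beta (ftest t) (pt_of w0) = t `^ alpha w0 * t `^ beta w0.
Proof.
rewrite /fHR (bigD1 w0) //= big1 ?mulr1; first by rewrite /ftest all_proj_pt_of eqxx.
by move=> w /negbTE w_neq; rewrite /ftest all_proj_pt_of w_neq powR1 mulr1.
Qed.

Lemma fHR_ftest_false t : (0 < k)%N -> fHR alpha beta (ftest t) (fun _ _ => false) = 1.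
Proof.
move=> k_gt0; rewrite /fHR big1 // => w _; rewrite /ftest.
have -> : [forall i, Defs.proj w (fun i (_ : V i) => false) i] = false.
  by apply/negbTE/forallPn; exists (Ordinal k_gt0).
by rewrite powR1 mulr1.
Qed.

Lemma fHR_ftest_le t x : 0 <= t ->
  fHR alpha beta (ftest 0) x <= fHR alpha beta (ftest t) x.
Proof.
move=> t0; have le0 a : 0 `^ a <= t `^ a.
  by have [->|a_neq0] := eqVneq a 0; rewrite ?powRr0 // powR0 // powR_ge0.
apply: ler_prod => w _; rewrite /ftest mulr_ge0 ?powR_ge0 //=.
by case: [forall i, _]; rewrite ?lexx // ler_pM ?powR_ge0.
Qed.

Lemma intfHR_ftest0_ge1 : (0 < k)%N -> 1 <= intfHR alpha beta (ftest 0).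
Proof. by move=> k_gt0; rewrite -(fHR_ftest_false 0 k_gt0) intfHR_ge_pt. Qed.

(* pt_of w0 is the only point whose w0-projection is all true, so there
   f_t^H = t^(alpha w0 + beta w0) while f_0^H = 0. *)
Lemma intfHR_ftest_ge w0 t : (alpha w0 != 0) || (beta w0 != 0) -> 0 < t ->
  intfHR alpha beta (ftest 0) + t `^ (alpha w0 + beta w0) <= intfHR alpha beta (ftest t).
Proof.
move=> w0_supp t_gt0.
have := intfHR_ge_addpt alpha beta _ _ (pt_of w0) (fun x => fHR_ftest_le t x (ltW t_gt0)).
rewrite !fHR_ftest_pt_of powRD ?(gt_eqF t_gt0) ?implybT //.
suff -> : 0 `^ alpha w0 * 0 `^ beta w0 = 0 :> R by rewrite subr0.
by case/orP: w0_supp => /powR0 ->; rewrite ?mul0r ?mulr0.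
Qed.

(* f_t = (1 - t) f_0 + t f_1 *)
Lemma normH_ftest_convex t :
  seminorm_on (LH mu2 alpha beta) (normH mu2 alpha beta) -> 0 <= t <= 1 ->
  normH_ftest t <= (1 - t) * normH_ftest 0 + t * normH_ftest 1.
Proof.
move=> [_ normHZ normHD] /andP[t0 t1].
have LH_ftest s : 0 <= s -> LH mu2 alpha beta (fun y => (ftest s y)%:C).
  by move=> s0; apply: LH_two_valued.
have [LH0 N0] := normHZ _ (1 - t)%:C (LH_ftest 0 (lexx 0)).
have [LH1 N1] := normHZ _ t%:C (LH_ftest 1 ler01).
have [_] := normHD _ _ LH0 LH1.
have -> : (fun y : 'I_k -> bool => (1 - t)%:C * (ftest 0 y)%:C + t%:C * (ftest 1 y)%:C) =
    (fun y => (ftest t y)%:C).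
  apply/funext => y; rewrite -!rmorphM -rmorphD /ftest; congr (_%:C).
  by case: ifP => _; rewrite ?mulr0 ?add0r !mulr1 ?subrK.
rewrite N0 N1 !normH_realE => [|y|y|y]; rewrite ?ftest_ge0 ?ler01 //.
by rewrite !ger0_norm ?ler0c ?subr_ge0 // -!rmorphM -rmorphD lecR.
Qed.

End TestFunctions.

Theorem corollary2p6 (R : realType) (k : nat) (V : 'I_k -> finType)
    (alpha beta : Vprod V -> R) :
  (0 < k)%N ->
  (forall i : 'I_k, (0 < #|V i|)%N) ->
  (forall w, 0 <= alpha w) -> (forall w, 0 <= beta w) ->
  seminorming alpha beta ->
  forall w : Vprod V, (alpha w != 0) || (beta w != 0) ->
    1 <= alpha w + beta w.
Proof.
move=> k_gt0 _ _ _ H_seminorming w0 w0_supp.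
set S := hsize alpha beta; set a := intfHR alpha beta (ftest 0).
have S_gt0 : 0 < S := hsize_gt0 alpha beta _ w0_supp.
have a_gt0 : 0 < a := lt_le_trans ltr01 (intfHR_ftest0_ge1 alpha beta k_gt0).
rewrite leNgt; apply/negP => g_lt1.
have [t /andP[t_gt0 t_le1]] := root_addpowR_superlinear _ _ _ _ a_gt0 S_gt0 g_lt1
  (powR_ge0 (intfHR alpha beta (ftest 1)) S^-1).
apply/negP; rewrite -leNgt.
have t01 : 0 <= t <= 1 by rewrite t_le1 ltW.
have := normH_ftest_convex alpha beta t (H_seminorming _ _ _ mu2_sigma_finite) t01.
rewrite -/S -/a => convex.
have lower :
    (a + t `^ (alpha w0 + beta w0)) `^ S^-1 <= intfHR alpha beta (ftest t) `^ S^-1.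
  by apply: ge0_ler_powR (intfHR_ftest_ge alpha beta w0 t w0_supp t_gt0);
    rewrite ?invr_ge0 ?nnegrE ?intfHR_ge0 ?addr_ge0 ?powR_ge0 ?(ltW S_gt0) ?(ltW a_gt0).
apply: (le_trans lower); apply: (le_trans convex).
by rewrite lerD2r ler_piMl ?powR_ge0 // gerBl ltW.
Qed.
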